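(* Let $G$ be a connected graph of order $n$ with chromatic number $\chi(G)=2$. If $n$ is even, then $ABC(G)\leq \frac{n}{2}\sqrt{n-2}$, with equality if and only if $G\cong T_{n,2}$. If $n$ is odd, then $ABC(G)\leq \frac{1}{2}\sqrt{(n-2)(n^2-1)}$, with equality if and only if $G\cong T_{n,2}$.
   Context: For a simple graph $G$, $ABC(G)=\sum_{uv\in E(G)}\sqrt{\frac{d(u)+d(v)-2}{d(u)d(v)}}$, where $d(u)$ is the degree of $u$. The chromatic number is the least number of colors in a proper vertex coloring. $T_{n,t}$ denotes the complete $t$-partite graph on $n$ vertices whose part sizes $n_1,\dots,n_t$ satisfy $|n_i-n_j|\leq 1$ for all $i,j$; so $T_{n,2}=K_{\lfloor n/2\rfloor,\lceil n/2\rceil}$. *)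

From HB Require Import structures.
From mathcomp Require Import all_boot all_order all_algebra.
Set Implicit Arguments. Unset Strict Implicit. Unset Printing Implicit Defensive.
Import Order.TTheory GRing.Theory Num.Theory.
Local Open Scope ring_scope.

Section Graphs.
Variable T : finType.
Variable e : rel T.

Definition simple_graph : Prop := symmetric e /\ irreflexive e.

Definition connected_graph : Prop := forall x y : T, connect e x y.

Definition deg (x : T) : nat := #|[set y | e x y]|.

Definition colorable (k : nat) : Prop :=
  exists f : T -> 'I_k, forall x y, e x y -> f x != f y.

Definition chromatic_number_is (k : nat) : Prop :=
  colorable k /\ forall j, (j < k)%N -> ~ colorable j.

(* ABC index: sum over edges uv of sqrt((d u + d v - 2)/(d u d v));
   each unordered edge {u,v} appears twice as ordered pair, hence the 1/2. *)
Definition ABC (R : rcfType) : R :=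
  2^-1 * \sum_(x : T) \sum_(y : T | e x y)
     Num.sqrt (((deg x)%:R + (deg y)%:R - 2) / ((deg x)%:R * (deg y)%:R)).

End Graphs.

(* T_{n,2} = K_{floor(n/2), ceil(n/2)} on vertex set 'I_n:
   parts {i | i < n/2} (size floor(n/2)) and {i | i >= n/2} (size ceil(n/2)) *)
Definition turan2 (n : nat) : rel 'I_n :=
  fun i j => (i < n./2)%N != (j < n./2)%N.

Definition graph_iso (T T' : finType) (e : rel T) (e' : rel T') : Prop :=
  exists f : T -> T', bijective f /\ forall x y, e' (f x) (f y) = e x y.
Arguments turan2 n : clear implicits.

From HB Require Import structures.
From mathcomp Require Import all_boot all_order all_algebra.
From mathcomp Require Import zify ring lra.

Set Implicit Arguments.
Unset Strict Implicit.
Unset Printing Implicit Defensive.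

Import Order.TTheory GRing.Theory Num.Theory.
Local Open Scope ring_scope.

(* Let A, B be the colour classes of G, with a = |A|, b = |B|, n = a + b, and
   let m be the number of edges.  For an edge xy with x in A the squared edge
   weight is 1/d(x) + 1/d(y) - 2/(d(x) d(y)), and d(x) <= b.  Summing over the
   edges, every vertex v contributes d(v) terms 1/d(v), so the squared weights
   sum to at most a + b - 2 = n - 2, and Cauchy-Schwarz gives
   ABC(G)^2 <= m (n - 2) <= a b (n - 2) <= floor(n/2) ceil(n/2) (n - 2).
   Equality forces m = a b, i.e. G is complete bipartite, and a b =
   floor(n/2) ceil(n/2), i.e. the parts are balanced; conversely T_{n,2}
   attains the bound.  As floor(n/2) ceil(n/2) is n^2/4 for even n and
   (n^2 - 1)/4 for odd n, this is the bound of the statement. *)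

Lemma sqr_sum_le_card_sum_sqr (R : realDomainType) (I : finType) (P : pred I)
    (f : I -> R) :
  (\sum_(i | P i) f i) ^+ 2 <= #|P|%:R * \sum_(i | P i) f i ^+ 2.
Proof.
set S1 := \sum_(i | P i) f i; set S2 := \sum_(i | P i) f i ^+ 2.
have sum_sqr_diff i :
    \sum_(j | P j) (f i - f j) ^+ 2 = #|P|%:R * f i ^+ 2 - 2 * f i * S1 + S2.
  under eq_bigr => j _ do rewrite sqrrB.
  rewrite big_split sumrB /= sumr_const sumrMnl -mulr_sumr -/S1 -/S2.
  by rewrite -[_ *+ #|P|]mulr_natl -[_ *+ 2]mulr_natl; ring.
have : 0 <= \sum_(i | P i) \sum_(j | P j) (f i - f j) ^+ 2.
  by do 2![apply: sumr_ge0 => ? _]; exact: sqr_ge0.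
under eq_bigr => i _ do rewrite sum_sqr_diff.
rewrite big_split sumrB /= sumr_const -mulr_sumr -mulr_suml -mulr_sumr -/S1 -/S2.
by rewrite -mulr_natr; lra.
Qed.

Definition turan2_edges (n : nat) : nat := n./2 * uphalf n.

Lemma turan2_edges_addn a d :
  turan2_edges (a + (a + d)) = (a * (a + d) + d./2 * uphalf d)%N.
Proof.
rewrite /turan2_edges (_ : (a + (a + d))./2 = a + d./2)%N; last by lia.
rewrite (_ : uphalf (a + (a + d)) = a + uphalf d)%N; last by lia.
have : (d./2 + uphalf d = d)%N by lia.
nia.
Qed.

Lemma muln_le_turan2_edges a b : (a * b <= turan2_edges (a + b))%N.
Proof.
wlog le_ab : a b / (a <= b)%N => [hw|].
  by case: (leqP a b) => [/hw//|/ltnW/hw]; rewrite addnC mulnC.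
have [d ->] : exists d, b = (a + d)%N by exists (b - a)%N; lia.
by rewrite turan2_edges_addn leq_addr.
Qed.

Lemma muln_eq_turan2_edges a b : (a * b = turan2_edges (a + b))%N ->
  a = (a + b)./2 \/ b = (a + b)./2.
Proof.
wlog le_ab : a b / (a <= b)%N => [hw|].
  by case: (leqP a b) => [/hw//|/ltnW/hw]; rewrite addnC mulnC => h /h[]; auto.
have [d ->] : exists d, b = (a + d)%N by exists (b - a)%N; lia.
rewrite turan2_edges_addn => /eqP; rewrite -[X in X == _]addn0 eqn_add2l eq_sym.
by rewrite muln_eq0 => /orP[] /eqP; lia.
Qed.

Lemma sqrtr_sqrM (R : rcfType) (c x : R) : 0 <= c ->
  Num.sqrt (c ^+ 2 * x) = c * Num.sqrt x.
Proof. by move=> c_ge0; rewrite sqrtrM ?sqr_ge0 // sqrtr_sqr ger0_norm. Qed.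

Lemma sqrt_turan2_edges_even (R : rcfType) n : ~~ odd n ->
  Num.sqrt ((n%:R - 2) * (turan2_edges n)%:R) = n%:R / 2 * Num.sqrt (n%:R - 2) :> R.
Proof.
move=> n_even; rewrite -sqrtr_sqrM ?divr_ge0 ?ler0n //; congr Num.sqrt.
have [k ->] : exists k, n = (k + k)%N by exists n./2; lia.
have -> : turan2_edges (k + k) = (k * k)%N.
  by rewrite /turan2_edges; congr (_ * _)%N; lia.
by rewrite natrD natrM; field.
Qed.

Lemma sqrt_turan2_edges_odd (R : rcfType) n : odd n ->
  Num.sqrt ((n%:R - 2) * (turan2_edges n)%:R) =
  2^-1 * Num.sqrt ((n%:R - 2) * (n%:R ^+ 2 - 1)) :> R.
Proof.
move=> n_odd; rewrite -sqrtr_sqrM ?invr_ge0 ?ler0n //; congr Num.sqrt.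
have [k ->] : exists k, n = (k + k + 1)%N by exists n./2; lia.
have -> : turan2_edges (k + k + 1) = (k * (k + 1))%N.
  by rewrite /turan2_edges; congr (_ * _)%N; lia.
by rewrite !natrD natrM; field.
Qed.

Definition abc_weight (R : rcfType) (T : finType) (e : rel T) (x y : T) : R :=
  Num.sqrt (((deg e x)%:R + (deg e y)%:R - 2) / ((deg e x)%:R * (deg e y)%:R)).

Definition bipartition (T : finType) (e : rel T) (A : {set T}) : Prop :=
  forall x y, e x y -> (x \in A) != (y \in A).

Definition complete_bipartition (T : finType) (e : rel T) (A : {set T}) : Prop :=
  forall x y, e x y = ((x \in A) != (y \in A)).

Section Bipartition.
Variables (T : finType) (e : rel T).

Lemma colorable2_bipartition : colorable e 2 -> exists A, bipartition e A.
Proof.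
case=> f f_proper; exists [set x | f x == ord0] => x y /f_proper; rewrite !inE.
by case: (f x) => -[|[|?]] ? //; case: (f y) => -[|[|?]] ? //.
Qed.

Lemma not_colorable1_edge : ~ colorable e 1 -> exists x y, e x y.
Proof.
have [/existsP[x /existsP[y exy]] | no_edge] := boolP [exists x, [exists y, e x y]].
  by exists x, y.
case; exists (fun=> ord0) => x y exy.
by case/negP: no_edge; apply/existsP; exists x; apply/existsP; exists y.
Qed.

Lemma connected_deg_gt0 x0 y0 : connected_graph e -> irreflexive e -> e x0 y0 ->
  forall x, (0 < deg e x)%N.
Proof.
move=> e_conn e_irr e_x0y0 x.
have [y x_neq_y] : exists y, x != y.
  have [->|] := eqVneq x x0; last by exists x0.
  by exists y0; apply: contraTneq e_x0y0 => <-; rewrite e_irr.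
case/connectP: (e_conn x y) => -[|z p] /=.
  by move=> _ y_eq_x; rewrite y_eq_x eqxx in x_neq_y.
by case/andP => exz _ _; apply/card_gt0P; exists z; rewrite inE.
Qed.

Lemma bipartitionC (A : {set T}) : bipartition e A -> bipartition e (~: A).
Proof. by move=> bipA x y /bipA; rewrite !in_setC; case: (x \in A); case: (y \in A). Qed.

Lemma complete_bipartitionC (A : {set T}) :
  complete_bipartition e A -> complete_bipartition e (~: A).
Proof. by move=> cA x y; rewrite cA !in_setC; case: (x \in A); case: (y \in A). Qed.

Lemma bipartition_card_gt0 (A : {set T}) x y : bipartition e A -> e x y ->
  (0 < #|A|)%N /\ (0 < #|~: A|)%N.
Proof.
move=> bipA /bipA; case: (boolP (x \in A)) => xA; case: (boolP (y \in A)) => yA //= _.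
  by split; apply/card_gt0P; [exists x | exists y; rewrite in_setC].
by split; apply/card_gt0P; [exists y | exists x; rewrite in_setC].
Qed.

Lemma neighbours_sub_setC (A : {set T}) x : bipartition e A -> x \in A ->
  [set y | e x y] \subset ~: A.
Proof.
move=> bipA xA; apply/subsetP => y.
by rewrite !inE => /bipA; rewrite xA; case: (y \in A).
Qed.

Lemma deg_le_card_setC (A : {set T}) x : bipartition e A -> x \in A ->
  (deg e x <= #|~: A|)%N.
Proof. by move=> bipA xA; apply/subset_leq_card/neighbours_sub_setC. Qed.

Lemma complete_bipartition_deg (A : {set T}) x : complete_bipartition e A ->
  x \in A -> deg e x = #|~: A|.
Proof. by move=> cA xA; apply: eq_card => y; rewrite !inE cA xA. Qed.

Lemma sum_deg_le_card_mul (A : {set T}) : bipartition e A ->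
  (\sum_(x in A) deg e x <= #|A| * #|~: A|
     ?= iff [forall x in A, deg e x == #|~: A|])%N.
Proof.
move=> bipA; rewrite -sum_nat_const; apply: leqif_sum => x xA.
exact/leqif_eq/deg_le_card_setC.
Qed.

Lemma complete_of_sum_deg (A : {set T}) : symmetric e -> bipartition e A ->
  (\sum_(x in A) deg e x = #|A| * #|~: A|)%N -> complete_bipartition e A.
Proof.
move=> e_sym bipA /eqP; rewrite (eq_leqif (sum_deg_le_card_mul bipA)).
move=> /forall_inP degA.
have across x y : x \in A -> y \notin A -> e x y.
  move=> xA yA; move: (degA x xA).
  rewrite /deg (eq_leqif (subset_leqif_cards (neighbours_sub_setC bipA xA))).
  by move=> /eqP/setP/(_ y); rewrite !inE yA.
move=> x y; apply/idP/idP => [/bipA //|].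
case: (boolP (x \in A)) => xA; case: (boolP (y \in A)) => yA //= _.
  exact: across.
by rewrite e_sym; apply: across.
Qed.

Lemma complete_bipartition_iso_turan2 (A : {set T}) :
  complete_bipartition e A -> #|A| = #|T|./2 -> graph_iso e (turan2 #|T|).
Proof.
move=> cA cardA.
pose s := enum A ++ enum (~: A).
have s_all x : x \in s by rewrite mem_cat !mem_enum in_setC orbN.
have index_lt x : (index x s < #|T|)%N.
  by rewrite -(cardsC A) !cardE -size_cat index_mem.
pose f x := Ordinal (index_lt x).
have f_half x : (f x < #|T|./2)%N = (x \in A).
  rewrite /= index_cat mem_enum -cardA cardE; case: ifP => xA.
    by rewrite index_mem mem_enum.
  by apply/negbTE; rewrite -leqNgt leq_addr.
exists f; split; last by move=> x y; rewrite /turan2 !f_half cA.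
apply: inj_card_bij; last by rewrite card_ord.
move=> x y /(congr1 val) /= eq_index.
by rewrite -[x](nth_index x (s_all x)) eq_index nth_index.
Qed.

Lemma iso_turan2_complete_bipartition :
  graph_iso e (turan2 #|T|) ->
  exists2 A : {set T}, complete_bipartition e A & #|A| = #|T|./2.
Proof.
case=> f [f_bij f_hom]; exists [set x | (f x < #|T|./2)%N].
  by move=> x y; rewrite -f_hom !inE.
transitivity #|[set i : 'I_#|T| | (i < #|T|./2)%N]|.
  rewrite -(on_card_preimset (onW_bij _ f_bij)).
  by apply: eq_card => x; rewrite !inE.
rewrite -sum1dep_card (eq_bigl (fun i : 'I_#|T| => true && (i < #|T|./2)%N)) //.
have half_le : (#|T|./2 <= #|T|)%N by lia.
by rewrite (big_ord_narrow_cond half_le) sum1_card card_ord.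
Qed.

End Bipartition.

Section ABCBipartite.
Variables (R : rcfType) (T : finType) (e : rel T).
Hypothesis e_sym : symmetric e.
Local Notation w := (abc_weight R e).

Lemma abc_weightC x y : w x y = w y x.
Proof. by rewrite /abc_weight (addrC (deg e x)%:R) (mulrC (deg e x)%:R). Qed.

Lemma sum_neighbours_const x (k : R) : \sum_(y | e x y) k = (deg e x)%:R * k.
Proof.
rewrite /deg -sum1dep_card natr_sum mulr_suml.
by apply: eq_bigr => y _; rewrite mul1r.
Qed.

Lemma bipartite_sum_swap (A : {set T}) (F : T -> T -> R) : bipartition e A ->
  \sum_(x in A) \sum_(y | e x y) F x y = \sum_(y in ~: A) \sum_(x | e y x) F x y.
Proof.
move=> bipA.
rewrite (exchange_big_dep (fun y => y \in ~: A)) => [|x y xA /bipA]; last first.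
  by rewrite xA in_setC.
apply: eq_bigr => y; rewrite in_setC => yA; apply: eq_bigl => x.
rewrite e_sym; case exy: (e y x); rewrite ?andbF // andbT.
by move: (bipA _ _ exy) yA; case: (y \in A); case: (x \in A).
Qed.

Lemma ABC_bipartite (A : {set T}) : bipartition e A ->
  ABC e R = \sum_(x in A) \sum_(y | e x y) w x y.
Proof.
move=> bipA.
have -> : ABC e R = 2^-1 * \sum_x \sum_(y | e x y) w x y by [].
rewrite (bigID (mem A)) /=.
have -> : \sum_(x | x \notin A) \sum_(y | e x y) w x y =
          \sum_(x in A) \sum_(y | e x y) w x y.
  rewrite (eq_bigl (mem (~: A))) => [|x]; last by rewrite !inE.
  rewrite (bipartite_sum_swap _ (bipartitionC bipA)) setCK.
  by apply: eq_bigr => x _; apply: eq_bigr => y _; rewrite abc_weightC.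
by rewrite -mulr2n -[_ *+ 2]mulr_natl; field.
Qed.

Lemma ABC_ge0 : 0 <= ABC e R.
Proof.
rewrite /ABC mulr_ge0 ?invr_ge0 ?ler0n //.
by do 2![apply: sumr_ge0 => ? _]; exact: sqrtr_ge0.
Qed.

Lemma ABC_complete_bipartite (A : {set T}) : complete_bipartition e A ->
  (0 < #|A|)%N -> (0 < #|~: A|)%N ->
  ABC e R = Num.sqrt ((#|T|%:R - 2) * (#|A| * #|~: A|)%:R).
Proof.
move=> cA a_gt0 b_gt0.
have bipA : bipartition e A by move=> x y; rewrite cA.
set a := #|A|; set b := #|~: A|.
set c : R := Num.sqrt ((b%:R + a%:R - 2) / (b%:R * a%:R)).
have w_const x y : x \in A -> e x y -> w x y = c.
  move=> xA; rewrite cA xA /= => yA.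
  rewrite /abc_weight (complete_bipartition_deg cA) //.
  by rewrite (complete_bipartition_deg (complete_bipartitionC cA)) ?setCK ?in_setC.
rewrite (ABC_bipartite bipA) (eq_bigr (fun _ => b%:R * c)) => [|x xA]; last first.
  rewrite (eq_bigr (fun _ => c)) => [|y]; last exact: w_const.
  by rewrite sum_neighbours_const (complete_bipartition_deg cA).
rewrite sumr_const -[_ *+ #|A|]mulr_natl mulrA -natrM -sqrtr_sqrM ?ler0n //.
congr Num.sqrt; rewrite -(cardsC A) -/a -/b natrD natrM; field.
by rewrite !pnatr_eq0 -!lt0n a_gt0 b_gt0.
Qed.

Lemma ABC_turan2 : (2 <= #|T|)%N -> graph_iso e (turan2 #|T|) ->
  ABC e R = Num.sqrt ((#|T|%:R - 2) * (turan2_edges #|T|)%:R).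
Proof.
move=> n_ge2 /iso_turan2_complete_bipartition [A cA cardA].
have cardAC : #|~: A| = uphalf #|T| by have := cardsC A; lia.
have -> : turan2_edges #|T| = (#|A| * #|~: A|)%N.
  by rewrite /turan2_edges cardA cardAC.
by rewrite (ABC_complete_bipartite cA) // ?cardA ?cardAC ?half_gt0 ?uphalf_gt0 // ltnW.
Qed.

Hypothesis deg_gt0 : forall x, (0 < deg e x)%N.

Lemma sum_edges_inv_deg (A : {set T}) :
  \sum_(x in A) \sum_(y | e x y) ((deg e x)%:R)^-1 = #|A|%:R :> R.
Proof.
rewrite (eq_bigr (fun _ => 1)) ?sumr_const // => x _.
by rewrite sum_neighbours_const mulfV // pnatr_eq0 -lt0n deg_gt0.
Qed.

Lemma sum_edges_inv_deg_r (A : {set T}) : bipartition e A ->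
  \sum_(x in A) \sum_(y | e x y) ((deg e y)%:R)^-1 = #|~: A|%:R :> R.
Proof. by move=> bipA; rewrite bipartite_sum_swap // sum_edges_inv_deg. Qed.

Lemma sum_edges_sqr_weight_le (A : {set T}) : bipartition e A ->
  (0 < #|~: A|)%N ->
  \sum_(x in A) \sum_(y | e x y) w x y ^+ 2 <= #|T|%:R - 2.
Proof.
move=> bipA b_gt0; set b : R := #|~: A|%:R.
have b_neq0 : b != 0 by rewrite pnatr_eq0 -lt0n.
have deg_ge1 x : 1 <= (deg e x)%:R :> R by rewrite (ler_nat R 1).
apply: le_trans (_ : \sum_(x in A) \sum_(y | e x y)
    (((deg e x)%:R)^-1 + (1 - 2 / b) * ((deg e y)%:R)^-1) <= _).
  apply: ler_sum => x xA; apply: ler_sum => y _.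
  have u_le_b : (deg e x)%:R <= b by rewrite ler_nat deg_le_card_setC.
  have := deg_ge1 x; have := deg_ge1 y; move: u_le_b.
  set u : R := (deg e x)%:R; set v : R := (deg e y)%:R => u_le_b v_ge1 u_ge1.
  rewrite sqr_sqrtr; last by apply: divr_ge0; [lra | apply: mulr_ge0; lra].
  rewrite -subr_ge0 (_ : _ - _ = 2 * (b - u) / (u * v * b)); last first.
    by field; rewrite !pnatr_eq0 -!lt0n b_gt0 !deg_gt0.
  by apply: divr_ge0; [lra | apply: mulr_ge0; [apply: mulr_ge0|]; lra].
have -> : \sum_(x in A) \sum_(y | e x y)
    (((deg e x)%:R)^-1 + (1 - 2 / b) * ((deg e y)%:R)^-1) =
  \sum_(x in A) \sum_(y | e x y) ((deg e x)%:R)^-1 +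
  (1 - 2 / b) * \sum_(x in A) \sum_(y | e x y) ((deg e y)%:R)^-1.
  rewrite mulr_sumr -big_split; apply: eq_bigr => x _.
  by rewrite mulr_sumr -big_split.
rewrite sum_edges_inv_deg sum_edges_inv_deg_r // -/b -(cardsC A) natrD -/b.
by rewrite mulrBl mul1r divfK // addrA.
Qed.

Lemma ABC_sqr_le (A : {set T}) : bipartition e A -> (0 < #|~: A|)%N ->
  ABC e R ^+ 2 <= (#|T|%:R - 2) * (\sum_(x in A) deg e x)%:R.
Proof.
move=> bipA b_gt0; rewrite (ABC_bipartite bipA) pair_big_dep /=.
pose edgeA := fun p : T * T => (p.1 \in A) && e p.1 p.2.
apply: (le_trans (sqr_sum_le_card_sum_sqr edgeA _)).
rewrite mulrC ler_pM ?ler0n //.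
- by apply: sumr_ge0 => ? _; exact: sqr_ge0.
- rewrite -(pair_big_dep _ _ (fun x y => w x y ^+ 2)).
  exact: sum_edges_sqr_weight_le.
- rewrite ler_nat -sum1_card -(pair_big_dep _ _ (fun _ _ => 1%N)).
  by apply/eq_leq/eq_bigr => x _; rewrite sum1dep_card.
Qed.

Lemma ABC_le_turan2 (A : {set T}) : bipartition e A ->
  (0 < #|A|)%N -> (0 < #|~: A|)%N ->
  ABC e R <= Num.sqrt ((#|T|%:R - 2) * (turan2_edges #|T|)%:R).
Proof.
move=> bipA a_gt0 b_gt0.
have n2_ge0 : 0 <= #|T|%:R - 2 :> R.
  by rewrite subr_ge0 (ler_nat R 2) -(cardsC A); lia.
rewrite -(ger0_norm ABC_ge0) -sqrtr_sqr ler_sqrt ?mulr_ge0 ?ler0n //.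
apply: (le_trans (ABC_sqr_le bipA b_gt0)); rewrite ler_wpM2l // ler_nat.
apply: (leq_trans (sum_deg_le_card_mul bipA)).
by rewrite -(cardsC A) muln_le_turan2_edges.
Qed.

Lemma ABC_eq_turan2 (A : {set T}) : bipartition e A ->
  (0 < #|A|)%N -> (0 < #|~: A|)%N ->
  ABC e R = Num.sqrt ((#|T|%:R - 2) * (turan2_edges #|T|)%:R) ->
  graph_iso e (turan2 #|T|).
Proof.
move=> bipA a_gt0 b_gt0 ABC_eq.
have card_T := cardsC A.
set m := (\sum_(x in A) deg e x)%N.
have m_le : (m <= #|A| * #|~: A|)%N := sum_deg_le_card_mul bipA.
have ab_le : (#|A| * #|~: A| <= turan2_edges #|T|)%N.
  by rewrite -card_T muln_le_turan2_edges.
have [m_eq ab_eq] :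
    m = (#|A| * #|~: A|)%N /\ (#|A| * #|~: A|)%N = turan2_edges #|T|.
  case: (ltngtP #|T| 2) => [n_lt2 | n_gt2 | n_eq2]; first lia.
    have n2_gt0 : 0 < #|T|%:R - 2 :> R by rewrite subr_gt0 (ltr_nat R 2).
    have := ABC_sqr_le bipA b_gt0.
    rewrite ABC_eq sqr_sqrtr ?mulr_ge0 ?ler0n ?(ltW n2_gt0) //.
    by rewrite ler_pM2l // ler_nat; lia.
  (* For n = 2 the squared bound reads 0 <= 0; instead a = b = 1 <= m. *)
  have m_ge : (#|A| <= m)%N by rewrite -sum1_card leq_sum.
  by move: ab_le; rewrite n_eq2 /turan2_edges /=; lia.
have cA := complete_of_sum_deg e_sym bipA m_eq.
rewrite -card_T in ab_eq.
case: (muln_eq_turan2_edges ab_eq); rewrite card_T => half_eq.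
  exact: complete_bipartition_iso_turan2 cA half_eq.
exact: complete_bipartition_iso_turan2 (complete_bipartitionC cA) half_eq.
Qed.

Lemma ABC_bipartite_extremal (A : {set T}) : bipartition e A ->
  (0 < #|A|)%N -> (0 < #|~: A|)%N ->
  ABC e R <= Num.sqrt ((#|T|%:R - 2) * (turan2_edges #|T|)%:R) /\
  (ABC e R = Num.sqrt ((#|T|%:R - 2) * (turan2_edges #|T|)%:R) <->
   graph_iso e (turan2 #|T|)).
Proof.
move=> bipA a_gt0 b_gt0; split; first exact: ABC_le_turan2 bipA a_gt0 b_gt0.
split; first exact: ABC_eq_turan2 bipA a_gt0 b_gt0.
by apply: ABC_turan2; rewrite -(cardsC A); lia.
Qed.

End ABCBipartite.

Theorem proposition5p2 (R : rcfType) (T : finType) (e : rel T) :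
  simple_graph e -> connected_graph e -> chromatic_number_is e 2 ->
  let n := #|T| in
  (~~ odd n ->
     ABC e R <= (n%:R / 2) * Num.sqrt (n%:R - 2) /\
     (ABC e R = (n%:R / 2) * Num.sqrt (n%:R - 2) <-> graph_iso e (turan2 n))) /\
  (odd n ->
     ABC e R <= 2^-1 * Num.sqrt ((n%:R - 2) * (n%:R ^+ 2 - 1)) /\
     (ABC e R = 2^-1 * Num.sqrt ((n%:R - 2) * (n%:R ^+ 2 - 1))
        <-> graph_iso e (turan2 n))).
Proof.
move=> [e_sym e_irr] e_conn [/colorable2_bipartition[A bipA] not_colorable] n.
have [x0 [y0 e_x0y0]] := not_colorable1_edge (not_colorable 1%N isT).
have deg_gt0 := connected_deg_gt0 e_conn e_irr e_x0y0.
have [a_gt0 b_gt0] := bipartition_card_gt0 bipA e_x0y0.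
have extremal := ABC_bipartite_extremal R e_sym deg_gt0 bipA a_gt0 b_gt0.
by split=> [/(sqrt_turan2_edges_even R) | /(sqrt_turan2_edges_odd R)] <-.
Qed.
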